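(* Let $n\ge1$, $i\ge1$ be integers and let $A$, $B$, $C$ be the functions on $D^*$ described in the context, with $\|A\|_D,\|B\|_D,\|C\|_D$ finite. For $(x,y)\in D^*$ let $\widehat{DT}(x,y)=\begin{pmatrix}A(x,y)&B(x,y)\\ C(x,y)&1\end{pmatrix}$, an $(n+1)\times(n+1)$ matrix, and let $M^i:L^i(\mathbb{R}^{n+1},\mathbb{R}^n)\to L^i(\mathbb{R}^{n+1},\mathbb{R}^n)$ be given by $M^i(b)(x_1,\dots,x_i)=b(\widehat{DT}(x,y)x_1,\dots,\widehat{DT}(x,y)x_i)$. Then the space $L^i(\mathbb{R}^{n+1},\mathbb{R}^n)$ can be endowed with a norm $|\cdot|_i$ equivalent to the operator norm $\|\cdot\|$ such that for every nonzero $b$, $$\frac{|M^i(b)|_i}{|b|_i}\le\max_{\substack{m,n'\in\mathbb{N}\\ m+n'=i}}\big\{(\|A\|_D+\|B\|_D)^m(\|C\|_D+1)^{n'}\big\}.$$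
   Context: $\|\cdot\|$ is a norm on $\mathbb{R}^n$, with induced operator norms; $L^i(\mathbb{R}^{n+1},\mathbb{R}^n)$ denotes continuous $i$-linear maps from $(\mathbb{R}^{n+1})^i$ to $\mathbb{R}^n$. $D=\{(x,y)\in\mathbb{R}^n\times\mathbb{R}:\|x\|\le1,|y|\le1\}$, $D_0=\{(x,0)\in D\}$, $D^*=D\setminus D_0$. $T=(F,G):D^*\to D$ with $F,G$ differentiable on $D^*$ and $\partial_yG$ nonvanishing on $D^*$; $A=\partial_xF(\partial_yG)^{-1}$ (an $n\times n$ matrix), $B=\partial_yF(\partial_yG)^{-1}$ (an $n$-column), $C=\partial_xG(\partial_yG)^{-1}$ (an $n$-row), and $\|M\|_D=\sup_{(x,y)\in D^*}\|M(x,y)\|$. *)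

From HB Require Import structures.
From mathcomp Require Import all_boot all_order all_algebra.
From mathcomp Require Import all_classical all_reals all_analysis.
Set Implicit Arguments. Unset Strict Implicit. Unset Printing Implicit Defensive.
Import Order.TTheory GRing.Theory Num.Theory.
Import numFieldNormedType.Exports.
Local Open Scope classical_set_scope.
Local Open Scope ring_scope.

Section Defs.
Variable R : realType.

Definition is_norm (n : nat) (nrm : 'cV[R]_n -> R) : Prop :=
  [/\ forall u, nrm u = 0 -> u = 0,
      forall (a : R) u, nrm (a *: u) = `|a| * nrm u &
      forall u v, nrm (u + v) <= nrm u + nrm v].

Definition Dset (n : nat) (nrm : 'cV[R]_n -> R) : set ('cV[R]_n * R) :=
  [set p | nrm p.1 <= 1 /\ `|p.2| <= 1].
Definition Dstar (n : nat) (nrm : 'cV[R]_n -> R) : set ('cV[R]_n * R) :=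
  [set p | Dset nrm p /\ p.2 != 0].

Definition opnorm_sq (n : nat) (nrm : 'cV[R]_n -> R) (A : 'M[R]_n) : R :=
  sup [set nrm (A *m u) | u in [set u | nrm u <= 1]].
Definition opnorm_row (n : nat) (nrm : 'cV[R]_n -> R) (C : 'rV[R]_n) : R :=
  sup [set `|(C *m u) 0 0| | u in [set u | nrm u <= 1]].

Definition supD (n : nat) (nrm : 'cV[R]_n -> R) (f : 'cV[R]_n * R -> R) : R :=
  sup [set f p | p in Dstar nrm].
Definition finiteD (n : nat) (nrm : 'cV[R]_n -> R) (f : 'cV[R]_n * R -> R) : Prop :=
  has_ubound [set f p | p in Dstar nrm].

Definition dxF (n : nat) (F : 'cV[R]_n * R -> 'cV[R]_n) (p : 'cV[R]_n * R) : 'M[R]_n :=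
  \matrix_(r, c) ('d F p (delta_mx c 0, 0)) r 0.
Definition dyF (n : nat) (F : 'cV[R]_n * R -> 'cV[R]_n) (p : 'cV[R]_n * R) : 'cV[R]_n :=
  'd F p (0, 1).
Definition dxG (n : nat) (G : 'cV[R]_n * R -> R) (p : 'cV[R]_n * R) : 'rV[R]_n :=
  \row_c ('d G p (delta_mx c 0, 0)).
Definition dyG (n : nat) (G : 'cV[R]_n * R -> R) (p : 'cV[R]_n * R) : R :=
  'd G p (0, 1).

Definition Amat n F G p : 'M[R]_n := (dyG G p)^-1 *: dxF F p.
Definition Bvec n F G p : 'cV[R]_n := (dyG G p)^-1 *: dyF F p.
Definition Crow n (G : 'cV[R]_n * R -> R) p : 'rV[R]_n := (dyG G p)^-1 *: dxG G p.

Definition DThat n F G p : 'M[R]_(n + 1) :=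
  block_mx (Amat F G p) (Bvec F G p) (Crow G p) 1.

Definition multilinear (n m i : nat) (b : ('I_i -> 'cV[R]_m) -> 'cV[R]_n) : Prop :=
  forall (xs : 'I_i -> 'cV[R]_m) (k : 'I_i) (a : R) (u v : 'cV[R]_m),
    b (fun j => if j == k then a *: u + v else xs j)
    = a *: b (fun j => if j == k then u else xs j)
      + b (fun j => if j == k then v else xs j).

Definition nrm_ext (n : nat) (nrm : 'cV[R]_n -> R) (w : 'cV[R]_(n + 1)) : R :=
  Num.max (nrm (usubmx w)) `|dsubmx w 0 0|.

Definition mlnorm (n i : nat) (nrm : 'cV[R]_n -> R)
  (b : ('I_i -> 'cV[R]_(n + 1)) -> 'cV[R]_n) : R :=
  sup [set nrm (b xs) | xs in [set xs | forall k, nrm_ext nrm (xs k) <= 1]].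

Definition Mi n i F G p (b : ('I_i -> 'cV[R]_(n + 1)) -> 'cV[R]_n)
  : ('I_i -> 'cV[R]_(n + 1)) -> 'cV[R]_n :=
  fun xs => b (fun k => DThat F G p *m xs k).

End Defs.

From HB Require Import structures.
From mathcomp Require Import all_boot all_order all_algebra.
From mathcomp Require Import all_classical all_reals all_analysis.
From mathcomp Require Import lra.
Import Order.TTheory GRing.Theory Num.Theory.
Import numFieldNormedType.Exports.
Local Open Scope classical_set_scope.
Local Open Scope ring_scope.

(* Take for the norm on L^i(R^{n+1}, R^n) the operator norm itself, R^{n+1} carrying the
   norm max(||x||, |y|).  For that norm the block matrix DT(x,y) has operator norm at most
   lam = max(||A|| + ||B||, ||C|| + 1), so by multilinearity ||M^i b|| <= lam^i ||b||, and lam^i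
   is the term m = i or m = 0 of the maximum.  The analytic input is that multilinear maps
   between finite-dimensional spaces are bounded, which rests on the equivalence of all norms
   on R^n, i.e. on the compactness of the unit sphere. *)

Set Implicit Arguments.
Unset Strict Implicit.
Unset Printing Implicit Defensive.

Lemma mx_norm_entry_le (R : realDomainType) m n (x : 'M[R]_(m, n)) i j : `|x i j| <= `|x|.
Proof. by rewrite [leRHS]/Num.norm /= mx_normrE; exact: (le_bigmax _ _ (i, j)). Qed.

Section NormFacts.
Variables (R : realType) (m : nat) (nu : 'cV[R]_m -> R).
Hypothesis nu_norm : is_norm nu.

Lemma is_norm0 : nu 0 = 0.
Proof. by case: nu_norm => _ nuZ _; rewrite -(scale0r (0 : 'cV_m)) nuZ normr0 mul0r. Qed.

Lemma is_normN u : nu (- u) = nu u.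
Proof. by case: nu_norm => _ nuZ _; rewrite -scaleN1r nuZ normrN normr1 mul1r. Qed.

Lemma is_norm_ge0 u : 0 <= nu u.
Proof.
case: nu_norm => _ _ nuD.
have := nuD u (- u); rewrite subrr is_norm0 is_normN => h.
by rewrite -(@pmulr_rge0 _ 2) // mulr2n mulrDl mul1r.
Qed.

Lemma is_norm_eq0 u : (nu u == 0) = (u == 0).
Proof. by case: nu_norm => nu0 _ _; apply/eqP/eqP => [/nu0 //|->]; exact: is_norm0. Qed.

Lemma is_norm_sum (I : Type) (r : seq I) (P : pred I) (F : I -> 'cV[R]_m) :
  nu (\sum_(j <- r | P j) F j) <= \sum_(j <- r | P j) nu (F j).
Proof.
case: nu_norm => _ _ nuD.
elim/big_ind2: _ => [|x1 x2 y1 y2 h1 h2|//]; first by rewrite is_norm0.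
exact: le_trans (nuD _ _) (lerD h1 h2).
Qed.

Lemma colE (u : 'cV[R]_m) : u = \sum_(c < m) u c 0 *: delta_mx c 0.
Proof. by rewrite {1}(matrix_sum_delta u); apply: eq_bigr => c _; rewrite big_ord1. Qed.

Lemma is_norm_le_coord u : nu u <= \sum_(c < m) `|u c 0| * nu (delta_mx c 0).
Proof.
case: nu_norm => _ nuZ _.
rewrite {1}(colE u); apply: le_trans (is_norm_sum _ _ _) _.
by apply: ler_sum => c _; rewrite nuZ.
Qed.

Let nuT (v : 'rV[R]_m) := nu v^T.
Let Mx := \sum_(c < m) nu (delta_mx c 0).

Lemma is_norm_trmx_lipschitz (v w : 'rV[R]_m) : `|nuT v - nuT w| <= Mx * `|v - w|.
Proof.
case: nu_norm => _ _ nuD.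
suff le_nuT a b : nuT a <= nuT b + Mx * `|a - b|.
  by rewrite ler_norml; have := le_nuT w v; rewrite distrC => ?; have := le_nuT v w; lra.
rewrite /nuT; have -> : a^T = b^T + (a - b)^T by rewrite linearB /= addrC subrK.
apply: le_trans (nuD _ _) _; rewrite lerD2l.
apply: le_trans (is_norm_le_coord _) _.
rewrite /Mx big_distrl /=; apply: ler_sum => c _.
rewrite [leRHS]mulrC; apply: ler_wpM2r; first exact: is_norm_ge0.
by rewrite mxE mx_norm_entry_le.
Qed.

Lemma is_norm_trmx_continuous : continuous nuT.
Proof.
move=> v; apply/(@cvgrPdist_lt _ _ _ _ (nbhs_filter v)) => e e0.
have Mx0 : 0 <= Mx by apply: sumr_ge0 => c _; exact: is_norm_ge0.
have e1 : 0 < e / (Mx + 1) by rewrite divr_gt0 // ltr_wpDl.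
apply/nbhs_ballP; exists (e / (Mx + 1)) => // t; rewrite -ball_normE /= => tv.
apply: le_lt_trans (is_norm_trmx_lipschitz v t) _.
apply: (@le_lt_trans _ _ ((Mx + 1) * `|v - t|)); first by rewrite ler_wpM2r ?lerDl.
by rewrite mulrC -ltr_pdivlMr // ltr_wpDl.
Qed.

Lemma is_norm_trmx_sphere_lbound :
  exists2 e : R, 0 < e & forall v : 'rV[R]_m, `|v| = 1 -> e <= nuT v.
Proof.
case: nu_norm => nu0 _ _.
pose S := [set v : 'rV[R]_m | `|v| = 1].
have S_compact : compact S.
  apply: bounded_closed_compact; first by exists 1; split => // x x1 v /= ->; rewrite ltW.
  have -> : S = (fun v : 'rV[R]_m => `|v|) @^-1` [set x | x = 1] by [].
  apply: preimage_closed; last exact: closed_eq.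
  by move=> x _; exact: norm_continuous.
have nuS_compact : compact (nuT @` S).
  apply: continuous_compact => //; apply: continuous_subspaceT.
  exact: is_norm_trmx_continuous.
have nuS_closed : closed (nuT @` S) by apply: compact_closed.
have nuS0 : ~ (nuT @` S) 0.
  case=> v Sv /nu0 /(congr1 trmx); rewrite trmxK linear0 => v0.
  by move: Sv; rewrite /S /= v0 normr0 => /eqP; rewrite eq_sym oner_eq0.
have : open (~` (nuT @` S)) by rewrite openC.
rewrite openE => /(_ 0 nuS0) /nbhs_ballP [e e0 He]; exists e => // v Sv.
rewrite leNgt; apply/negP => nuv_lt; apply: (He (nuT v)); last by exists v.
by rewrite -ball_normE /ball_ /= sub0r normrN ger0_norm ?is_norm_ge0.
Qed.

Lemma coord_le_is_norm :
  exists2 K : R, 0 < K & forall (u : 'cV[R]_m) c, `|u c 0| <= K * nu u.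
Proof.
case: nu_norm => _ nuZ _.
have [e e0 He] := is_norm_trmx_sphere_lbound.
exists e^-1 => [|u c]; first by rewrite invr_gt0.
have [->|un0] := eqVneq u 0; first by rewrite mxE normr0 is_norm0 mulr0.
have uT0 : 0 < `|u^T| by rewrite normr_gt0 -[X in _ != X]trmx0 (inj_eq trmx_inj).
have coord_le : `|u c 0| <= `|u^T|.
  by have := mx_norm_entry_le u^T 0 c; rewrite mxE.
have : e <= `|u^T|^-1 * nu u.
  have := He (`|u^T|^-1 *: u^T).
  rewrite normrZ normrV ?unitfE ?gt_eqF // normr_id mulVf ?gt_eqF // => /(_ erefl).
  by rewrite /nuT linearZ /= trmxK nuZ ger0_norm // invr_ge0 ltW.
rewrite -(ler_pM2l uT0) mulrA mulfV ?gt_eqF // mul1r => le_nu.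
apply: le_trans coord_le _.
by rewrite -(ler_pM2l e0) mulrA mulfV ?gt_eqF // mul1r mulrC.
Qed.

End NormFacts.

Lemma abs_coord_norm (R : realType) : is_norm (fun v : 'cV[R]_1 => `|v 0 0|).
Proof.
split=> [v /normr0_eq0 v0|a u|u v]; last by rewrite mxE ler_normD.
  by apply/matrixP => i j; rewrite !ord1 v0 mxE.
by rewrite mxE normrM.
Qed.

Section OperatorNorm.
Variables (R : realType) (m : nat) (nu : 'cV[R]_m -> R).
Hypothesis nu_norm : is_norm nu.

Lemma mulmx_bounded p (ny : 'cV[R]_p -> R) (A : 'M[R]_(p, m)) : is_norm ny ->
  exists2 M, 0 <= M & forall u, ny (A *m u) <= M * nu u.
Proof.
move=> ny_norm; have [_ nyZ _] := ny_norm; have [K K0 HK] := coord_le_is_norm nu_norm.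
exists (K * \sum_(c < m) ny (A *m delta_mx c 0)) => [|u].
  by apply: mulr_ge0; [exact: ltW | apply: sumr_ge0 => c _; exact: is_norm_ge0].
rewrite {1}(colE u) mulmx_sumr; apply: le_trans (is_norm_sum ny_norm _ _ _) _.
rewrite mulrAC big_distrr /=; apply: ler_sum => c _.
by rewrite -scalemxAr nyZ ler_wpM2r ?HK ?is_norm_ge0.
Qed.

Section Homogeneous.
Variable f : 'cV[R]_m -> R.
Hypothesis fZ : forall a x, f (a *: x) = `|a| * f x.
Hypothesis f_bounded : exists2 M, 0 <= M & forall x, f x <= M * nu x.

Let ball_img := [set f u | u in [set u | nu u <= 1]].

Let f0 : f 0 = 0.
Proof. by rewrite -(scale0r (0 : 'cV_m)) fZ normr0 mul0r. Qed.

Lemma homogeneous_ubound : has_ubound ball_img.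
Proof.
case: f_bounded => M M0 fM; exists M => _ [u u1 <-].
by apply: le_trans (fM u) _; rewrite ler_piMr.
Qed.

Lemma homogeneous_sup_ge0 : 0 <= sup ball_img.
Proof.
rewrite -f0; apply: (ub_le_sup homogeneous_ubound).
by exists 0; rewrite //= (is_norm0 nu_norm).
Qed.

Lemma homogeneous_le_sup x : f x <= sup ball_img * nu x.
Proof.
case: nu_norm => _ nuZ _.
have [->|x0] := eqVneq x 0.
  by rewrite (is_norm0 nu_norm) mulr0 f0.
have nx : 0 < nu x by rewrite lt_def (is_norm_ge0 nu_norm) andbT (is_norm_eq0 nu_norm).
have xE : x = nu x *: ((nu x)^-1 *: x) by rewrite scalerA mulfV ?gt_eqF // scale1r.
rewrite {1}xE fZ gtr0_norm // mulrC ler_pM2r //.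
apply: (ub_le_sup homogeneous_ubound); exists ((nu x)^-1 *: x) => //=.
by rewrite nuZ gtr0_norm ?invr_gt0 // mulVf ?gt_eqF.
Qed.

End Homogeneous.

Lemma opnorm_sq_ge0 (A : 'M[R]_m) : 0 <= opnorm_sq nu A.
Proof.
apply: (@homogeneous_sup_ge0 (fun x => nu (A *m x))); last exact: mulmx_bounded.
by move=> a x; rewrite -scalemxAr; case: nu_norm.
Qed.

Lemma mulmx_le_opnorm_sq (A : 'M[R]_m) x : nu (A *m x) <= opnorm_sq nu A * nu x.
Proof.
apply: (@homogeneous_le_sup (fun x => nu (A *m x))); last exact: mulmx_bounded.
by move=> a y; rewrite -scalemxAr; case: nu_norm.
Qed.

Lemma opnorm_row_ge0 (C : 'rV[R]_m) : 0 <= opnorm_row nu C.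
Proof.
apply: (@homogeneous_sup_ge0 (fun x => `|(C *m x) 0 0|)).
  by move=> a x; rewrite -scalemxAr mxE normrM.
exact: mulmx_bounded (abs_coord_norm R).
Qed.

Lemma mulmx_le_opnorm_row (C : 'rV[R]_m) x :
  `|(C *m x) 0 0| <= opnorm_row nu C * nu x.
Proof.
apply: (@homogeneous_le_sup (fun x => `|(C *m x) 0 0|)).
  by move=> a y; rewrite -scalemxAr mxE normrM.
exact: mulmx_bounded (abs_coord_norm R).
Qed.

End OperatorNorm.

Section ExtendedNorm.
Variables (R : realType) (n : nat) (nrm : 'cV[R]_n -> R).
Hypothesis nrm_norm : is_norm nrm.

Lemma nrm_ext_norm : is_norm (nrm_ext nrm).
Proof.
have [nrm0 nrmZ nrmD] := nrm_norm; rewrite /nrm_ext; split.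
- move=> w /eqP; rewrite eq_le ge_max => /andP[/andP[u_le d_le] _].
  have u0 : usubmx w = 0.
    by apply: nrm0; apply/eqP; rewrite eq_le u_le is_norm_ge0.
  have d0 : dsubmx w = 0.
    apply/matrixP => i j; rewrite !ord1 [RHS]mxE; apply/eqP.
    by rewrite -normr_eq0 eq_le d_le normr_ge0.
  by rewrite -(vsubmxK w) u0 d0 col_mx0.
- by move=> a w; rewrite !linearZ /= nrmZ mxE normrM maxr_pMr.
- move=> u v; rewrite !linearD /= mxE ge_max; apply/andP; split.
    by apply: le_trans (nrmD _ _) _; apply: lerD; rewrite le_max lexx.
  by apply: le_trans (ler_normD _ _) _; apply: lerD; rewrite le_max lexx orbT.
Qed.

Lemma mulmx_cV1 (B : 'cV[R]_n) (y : 'cV[R]_1) : B *m y = y 0 0 *: B.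
Proof. by apply/matrixP => i j; rewrite !mxE big_ord1 !ord1 mulrC. Qed.

Lemma nrm_ext_block_mul (A : 'M[R]_n) (B : 'cV[R]_n) (C : 'rV[R]_n) w :
  nrm_ext nrm (block_mx A B C 1 *m w)
    <= Num.max (opnorm_sq nrm A + nrm B) (opnorm_row nrm C + 1) * nrm_ext nrm w.
Proof.
have [_ nrmZ nrmD] := nrm_norm.
have opA0 := opnorm_sq_ge0 nrm_norm A; have opA_le := mulmx_le_opnorm_sq nrm_norm A.
have opC0 := opnorm_row_ge0 nrm_norm C; have opC_le := mulmx_le_opnorm_row nrm_norm C.
rewrite -{1}(vsubmxK w) mul_block_col /nrm_ext col_mxKu col_mxKd mul1mx mulmx_cV1.
set x := usubmx w; set y := dsubmx w 0 0; set r := Num.max (nrm x) `|y|.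
have -> : (C *m x + dsubmx w) 0 0 = (C *m x) 0 0 + y by rewrite mxE.
have x_le : nrm x <= r by rewrite le_max lexx.
have y_le : `|y| <= r by rewrite le_max lexx orbT.
have r0 : 0 <= r := le_trans (normr_ge0 y) y_le.
rewrite ge_max; apply/andP; split.
- apply: le_trans (nrmD _ _) _; rewrite nrmZ.
  apply: (@le_trans _ _ ((opnorm_sq nrm A + nrm B) * r)); last first.
    by apply: ler_wpM2r => //; rewrite le_max lexx.
  rewrite mulrDl; apply: lerD.
    exact: le_trans (opA_le x) (ler_wpM2l opA0 x_le).
  by rewrite mulrC; apply: ler_wpM2l; first exact: is_norm_ge0.
- apply: le_trans (ler_normD _ _) _.
  apply: (@le_trans _ _ ((opnorm_row nrm C + 1) * r)); last first.
    by apply: ler_wpM2r => //; rewrite le_max lexx orbT.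
  rewrite mulrDl mul1r; apply: lerD => //.
  exact: le_trans (opC_le x) (ler_wpM2l opC0 x_le).
Qed.

End ExtendedNorm.

Definition update (T : Type) (i : nat) (xs : 'I_i -> T) (k : 'I_i) (w : T) : 'I_i -> T :=
  fun j => if j == k then w else xs j.

Section Update.
Variables (T : Type) (i : nat).

Lemma update_id (xs : 'I_i -> T) k : update xs k (xs k) = xs.
Proof. by apply: funext => j; rewrite /update; case: eqVneq => // ->. Qed.

Lemma update_neq (xs : 'I_i -> T) k w j : j != k -> update xs k w j = xs j.
Proof. by rewrite /update => /negbTE ->. Qed.

Lemma update_prefix (f g : 'I_i -> T) s (si : (s < i)%N) :
  (fun j : 'I_i => if (j < s.+1)%N then f j else g j)
  = update (fun j : 'I_i => if (j < s)%N then f j else g j) (Ordinal si) (f (Ordinal si)).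
Proof.
apply: funext => j; rewrite /update -val_eqE /= ltnS leq_eqVlt.
by case: eqVneq => [js|_] //=; congr f; apply: val_inj.
Qed.

Lemma prod_prefixS (R : comPzSemiRingType) (F : 'I_i -> R) s (si : (s < i)%N) :
  \prod_(j < i | (j < s.+1)%N) F j = F (Ordinal si) * \prod_(j < i | (j < s)%N) F j.
Proof.
rewrite (bigD1 (Ordinal si)) //=; congr (_ * _); apply: eq_bigl => j.
by rewrite -val_eqE /= ltnS leq_eqVlt; case: ltngtP.
Qed.

Lemma prod_prefix_update (R : comPzSemiRingType) (F : T -> R) xs w s (si : (s < i)%N) :
  \prod_(j < i | (j < s)%N) F (update xs (Ordinal si) w j)
  = \prod_(j < i | (j < s)%N) F (xs j).
Proof.
apply: eq_bigr => j js; rewrite update_neq //.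
by rewrite -val_eqE /= neq_ltn js.
Qed.

End Update.

Lemma sup_image_mull (R : realType) (T : Type) (A : set T) (f : T -> R) (c : R) :
  0 <= c -> A !=set0 -> has_ubound (f @` A) ->
  sup [set c * f x | x in A] = c * sup (f @` A).
Proof.
move=> c0 [x0 Ax0] f_ub.
have cf_ub : has_ubound [set c * f x | x in A].
  by case: f_ub => M HM; exists (c * M) => _ [x Ax <-]; rewrite ler_wpM2l // HM //; exists x.
apply/eqP; rewrite eq_le; apply/andP; split.
  apply: ge_sup; first by exists (c * f x0), x0.
  by move=> _ [x Ax <-]; rewrite ler_wpM2l //; apply: (ub_le_sup f_ub); exists x.
have [c_eq0|c_neq0] := eqVneq c 0.
  rewrite c_eq0 in cf_ub *; have cf0 : [set 0 * f x | x in A] (0 * f x0) by exists x0.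
  by have := ub_le_sup cf_ub cf0; rewrite !mul0r.
have c_gt0 : 0 < c by rewrite lt_def c_neq0.
rewrite -ler_pdivlMl //; apply: ge_sup; first by exists (f x0), x0.
by move=> _ [x Ax <-]; rewrite ler_pdivlMl //; apply: (ub_le_sup cf_ub); exists x.
Qed.

Section MultilinearNorm.
Variables (R : realType) (k p i : nat) (nx : 'cV[R]_k -> R) (ny : 'cV[R]_p -> R).
Hypotheses (nx_norm : is_norm nx) (ny_norm : is_norm ny).

Definition ml_opnorm (b : ('I_i -> 'cV[R]_k) -> 'cV[R]_p) : R :=
  sup [set ny (b xs) | xs in [set xs | forall j, nx (xs j) <= 1]].

Section FixedMap.
Variable b : ('I_i -> 'cV[R]_k) -> 'cV[R]_p.
Hypothesis b_ml : multilinear b.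

Lemma multilinear0 xs j : b (update xs j 0) = 0.
Proof.
have b0 : b (update xs j 0) = b (update xs j 0) + b (update xs j 0).
  by have := b_ml xs j 1 0 0; rewrite !scale1r addr0.
by apply: (addrI (b (update xs j 0))); rewrite addr0 -b0.
Qed.

Lemma multilinearZ xs j a u : b (update xs j (a *: u)) = a *: b (update xs j u).
Proof. by have := b_ml xs j a u 0; rewrite addr0 => ->; rewrite multilinear0 addr0. Qed.

Lemma multilinear_sum (I : Type) (r : seq I) (a : I -> R) (v : I -> 'cV[R]_k) xs j :
  b (update xs j (\sum_(c <- r) a c *: v c)) = \sum_(c <- r) a c *: b (update xs j (v c)).
Proof.
elim: r => [|c r IH]; first by rewrite !big_nil multilinear0.
by rewrite !big_cons -IH /update b_ml.
Qed.

Lemma multilinear_scale (c : 'I_i -> R) xs :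
  b (fun j => c j *: xs j) = (\prod_j c j) *: b xs.
Proof.
suff scale_prefix s : (s <= i)%N ->
    b (fun j : 'I_i => if (j < s)%N then c j *: xs j else xs j)
    = (\prod_(j < i | (j < s)%N) c j) *: b xs.
  have prefix_all : (fun j : 'I_i => if (j < i)%N then c j *: xs j else xs j)
                    = (fun j => c j *: xs j) by apply: funext => j; rewrite ltn_ord.
  rewrite -prefix_all scale_prefix //; congr (_ *: _).
  by apply: eq_bigl => j; rewrite ltn_ord.
elim: s => [_|s IH si]; first by rewrite big_pred0 // scale1r.
set k0 := Ordinal si.
rewrite (update_prefix _ _ si) multilinearZ (prod_prefixS _ si) -scalerA -IH; last exact: ltnW.
suff -> : update (fun j : 'I_i => if (j < s)%N then c j *: xs j else xs j) k0 (xs k0)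
          = (fun j : 'I_i => if (j < s)%N then c j *: xs j else xs j) by [].
by apply: funext => j; rewrite /update; case: eqVneq => // ->; rewrite ltnn.
Qed.

Lemma multilinear_bounded :
  exists2 C, 0 <= C & forall xs, ny (b xs) <= C * \prod_j nx (xs j).
Proof.
have [K K0 coord_le] := coord_le_is_norm nx_norm.
have [_ nyZ _] := ny_norm.
suff bound_prefix s : (s <= i)%N -> exists2 C, 0 <= C & forall xs,
    (forall j : 'I_i, (s <= j)%N -> exists c, xs j = delta_mx c 0) ->
    ny (b xs) <= C * \prod_(j < i | (j < s)%N) nx (xs j).
  have [C C0 HC] := bound_prefix i (leqnn i); exists C => // xs.
  have -> : \prod_j nx (xs j) = \prod_(j < i | (j < i)%N) nx (xs j).
    by apply: eq_bigl => j; rewrite ltn_ord.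
  by apply: HC => j; rewrite leqNgt ltn_ord.
elim: s => [_|s IH si].
  exists (\sum_(f : {ffun 'I_i -> 'I_k}) ny (b (fun j => delta_mx (f j) 0))).
    by apply: sumr_ge0 => f _; exact: is_norm_ge0.
  move=> xs basis_xs; rewrite [\prod_(j < i | _) _]big_pred0 // mulr1.
  have pick j : {c | xs j = delta_mx c 0} by apply: cid; exact: basis_xs.
  pose f := [ffun j => sval (pick j)].
  have -> : xs = (fun j => delta_mx (f j) 0).
    by apply: funext => j; rewrite ffunE; case: (pick j).
  rewrite (bigD1 f) //= lerDl.
  by apply: sumr_ge0 => g _; exact: is_norm_ge0.
have [C C0 HC] := IH (ltnW si); set k0 := Ordinal si.
exists (\sum_(c < k) K * C) => [|xs basis_xs].
  by apply: sumr_ge0 => c _; rewrite mulr_ge0 // ltW.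
have expand : b xs = \sum_(c < k) xs k0 c 0 *: b (update xs k0 (delta_mx c 0)).
  by rewrite -{1}(update_id xs k0) {1}(colE (xs k0)) multilinear_sum.
rewrite (prod_prefixS _ si) expand; apply: le_trans (is_norm_sum ny_norm _ _ _) _.
rewrite mulrA big_distrl /= big_distrl /=; apply: ler_sum => c _; rewrite nyZ.
have le_C : ny (b (update xs k0 (delta_mx c 0)))
            <= C * \prod_(j < i | (j < s)%N) nx (xs j).
  rewrite -(prod_prefix_update _ _ (delta_mx c 0) si); apply: HC => j sj.
  have [->|jk0] := eqVneq j k0; first by exists c; rewrite /update eqxx.
  rewrite update_neq //; apply: basis_xs.
  by move: jk0; rewrite -val_eqE /= ltn_neqAle sj andbT eq_sym.
rewrite -!mulrA [C * _]mulrCA [K * _]mulrA.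
exact: ler_pM (normr_ge0 _) (is_norm_ge0 ny_norm _) (coord_le _ _) le_C.
Qed.

Lemma ml_opnorm_ubound :
  has_ubound [set ny (b xs) | xs in [set xs | forall j, nx (xs j) <= 1]].
Proof.
have [C C0 HC] := multilinear_bounded.
exists C => _ [xs xs1 <-]; apply: le_trans (HC xs) _.
rewrite ler_piMr // prodr_ile1 // => j _.
by rewrite (is_norm_ge0 nx_norm) xs1.
Qed.

Lemma ml_opnorm_ge0 : 0 <= ml_opnorm b.
Proof.
apply: le_trans (is_norm_ge0 ny_norm (b (fun _ => 0))) (ub_le_sup ml_opnorm_ubound _).
by exists (fun _ => 0) => // j; rewrite (is_norm0 nx_norm).
Qed.

Lemma ml_opnorm_le xs : ny (b xs) <= ml_opnorm b * \prod_j nx (xs j).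
Proof.
have [_ nyZ _] := ny_norm.
have [/existsP [j /eqP xj0]|/existsPn xs_neq0] := boolP [exists j, xs j == 0].
  have -> : b xs = 0 by rewrite -(update_id xs j) xj0 multilinear0.
  rewrite (is_norm0 ny_norm); apply: mulr_ge0 ml_opnorm_ge0 _.
  by apply: prodr_ge0 => l _; exact: is_norm_ge0.
have nx_gt0 j : 0 < nx (xs j).
  by rewrite lt_def (is_norm_eq0 nx_norm) xs_neq0 (is_norm_ge0 nx_norm).
pose ys j := (nx (xs j))^-1 *: xs j.
have xsE : xs = (fun j => nx (xs j) *: ys j).
  by apply: funext => j; rewrite /ys scalerA mulfV ?gt_eqF // scale1r.
have prod_ge0 : 0 <= \prod_j nx (xs j) by apply: prodr_ge0 => j _; exact: ltW.
rewrite {1}xsE multilinear_scale nyZ ger0_norm // mulrC.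
apply: (ler_wpM2r prod_ge0); apply: (ub_le_sup ml_opnorm_ubound); exists ys => //= j.
have [_ nxZ _] := nx_norm; have nxj := nx_gt0 j.
by rewrite /ys nxZ gtr0_norm ?invr_gt0 // mulVf ?gt_eqF.
Qed.

Lemma ml_opnorm_eq0 : ml_opnorm b = 0 -> b = (fun _ => 0).
Proof.
move=> b0; apply: funext => xs; apply/eqP.
rewrite -(is_norm_eq0 ny_norm) eq_le (is_norm_ge0 ny_norm) andbT.
by have := ml_opnorm_le xs; rewrite b0 mul0r.
Qed.

Lemma ml_opnorm_gt0 : b <> (fun _ => 0) -> 0 < ml_opnorm b.
Proof.
move=> b_neq0; rewrite lt_def ml_opnorm_ge0 andbT.
by apply: contra_notN b_neq0 => /eqP /ml_opnorm_eq0.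
Qed.

Lemma ml_opnorm_comp_le (f : 'cV[R]_k -> 'cV[R]_k) lam : 0 <= lam ->
    (forall x, nx (f x) <= lam * nx x) ->
  ml_opnorm (fun xs => b (fun j => f (xs j))) <= lam ^+ i * ml_opnorm b.
Proof.
move=> lam0 f_le; apply: ge_sup.
  by exists (ny (b (fun => f 0))), (fun _ => 0) => // j; rewrite (is_norm0 nx_norm).
move=> _ [xs xs1 <-]; apply: le_trans (ml_opnorm_le _) _.
rewrite mulrC; apply: (ler_wpM2r ml_opnorm_ge0).
have -> : lam ^+ i = \prod_(j < i) lam by rewrite prodr_const card_ord.
apply: ler_prod => j _; rewrite (is_norm_ge0 nx_norm) /=.
by apply: le_trans (f_le _) _; rewrite -[leRHS]mulr1 ler_wpM2l.
Qed.

End FixedMap.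

Lemma ml_opnormZ a b : multilinear b ->
  ml_opnorm (fun xs => a *: b xs) = `|a| * ml_opnorm b.
Proof.
move=> b_ml; have [_ nyZ _] := ny_norm; rewrite /ml_opnorm.
under eq_imagel do rewrite nyZ.
apply: sup_image_mull => //; last exact: ml_opnorm_ubound b_ml.
by exists (fun _ => 0) => j; rewrite (is_norm0 nx_norm).
Qed.

Lemma ml_opnormD b1 b2 : multilinear b1 -> multilinear b2 ->
  ml_opnorm (fun xs => b1 xs + b2 xs) <= ml_opnorm b1 + ml_opnorm b2.
Proof.
move=> b1_ml b2_ml; have [_ _ nyD] := ny_norm; apply: ge_sup.
  by exists (ny (b1 (fun => 0) + b2 (fun => 0))), (fun _ => 0) => // j; rewrite (is_norm0 nx_norm).
move=> _ [xs xs1 <-]; apply: le_trans (nyD _ _) _.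
apply: lerD; [apply: (ub_le_sup (ml_opnorm_ubound b1_ml)) |
              apply: (ub_le_sup (ml_opnorm_ubound b2_ml))]; by exists xs.
Qed.
End MultilinearNorm.

Lemma expr_max_le_bigmax (R : realDomainType) (a c : R) i :
  Num.max a c ^+ i <= \big[Num.max/0]_(m < i.+1) (a ^+ m * c ^+ (i - m)).
Proof.
pose F (m : 'I_i.+1) := a ^+ m * c ^+ (i - m).
have [ac|ca] := leP a c.
  apply: (@le_trans _ _ (F ord0)); last exact: (le_bigmax 0 F ord0).
  by rewrite /F expr0 mul1r subn0.
apply: (@le_trans _ _ (F ord_max)); last exact: (le_bigmax 0 F ord_max).
by rewrite /F subnn expr0 mulr1.
Qed.

Lemma Mi_mlnorm_le (R : realType) n i (nrm : 'cV[R]_n -> R) F G p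
    (b : ('I_i -> 'cV[R]_(n + 1)) -> 'cV[R]_n) :
  is_norm nrm -> multilinear b ->
  mlnorm nrm (Mi F G p b)
    <= Num.max (opnorm_sq nrm (Amat F G p) + nrm (Bvec F G p))
               (opnorm_row nrm (Crow G p) + 1) ^+ i * mlnorm nrm b.
Proof.
move=> nrm_norm b_ml.
apply: (ml_opnorm_comp_le (nrm_ext_norm nrm_norm) nrm_norm b_ml
          (f := fun x => DThat F G p *m x)); last exact: nrm_ext_block_mul.
by rewrite le_max addr_ge0 ?opnorm_sq_ge0 ?(is_norm_ge0 nrm_norm).
Qed.

Unset Implicit Arguments.

Theorem mainTheorem6 (R : realType) (n i : nat) (nrm : 'cV[R]_n -> R)
    (F : 'cV[R]_n * R -> 'cV[R]_n) (G : 'cV[R]_n * R -> R) :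
  (1 <= n)%N -> (1 <= i)%N -> is_norm nrm ->
  (* T = (F, G) maps D^* into D *)
  (forall p, Dstar nrm p -> Dset nrm (F p, G p)) ->
  (* F, G differentiable on D^*, d_y G nonvanishing on D^* *)
  (forall p, Dstar nrm p -> differentiable F p /\ differentiable G p) ->
  (forall p, Dstar nrm p -> dyG G p != 0) ->
  (* ||A||_D, ||B||_D, ||C||_D finite *)
  finiteD nrm (fun p => opnorm_sq nrm (Amat F G p)) ->
  finiteD nrm (fun p => nrm (Bvec F G p)) ->
  finiteD nrm (fun p => opnorm_row nrm (Crow G p)) ->
  let nA := supD nrm (fun p => opnorm_sq nrm (Amat F G p)) in
  let nB := supD nrm (fun p => nrm (Bvec F G p)) in
  let nC := supD nrm (fun p => opnorm_row nrm (Crow G p)) in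
  exists N : (('I_i -> 'cV[R]_(n + 1)) -> 'cV[R]_n) -> R,
    (* N is a norm on L^i(R^{n+1}, R^n) *)
    [/\ forall b, multilinear b -> N b = 0 -> b = (fun _ => 0),
        forall (a : R) b, multilinear b -> N (fun xs => a *: b xs) = `|a| * N b &
        forall b1 b2, multilinear b1 -> multilinear b2 ->
          N (fun xs => b1 xs + b2 xs) <= N b1 + N b2] /\
    (* N is equivalent to the operator norm *)
    (exists c1 c2 : R, 0 < c1 /\ 0 < c2 /\
       forall b, multilinear b ->
         c1 * mlnorm nrm b <= N b /\ N b <= c2 * mlnorm nrm b) /\
    (* the contraction estimate *)
    (forall p, Dstar nrm p ->
       forall b, multilinear b -> b <> (fun _ => 0) ->
         N (Mi F G p b) / N b
           <= \big[Num.max/0]_(m < i.+1) ((nA + nB) ^+ m * (nC + 1) ^+ (i - m))).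
Proof.
move=> _ _ nrm_norm _ _ _ fA fB fC nA nB nC.
have ext_norm := nrm_ext_norm nrm_norm.
exists (mlnorm nrm); split; [split|split].
- by move=> b b_ml; exact: ml_opnorm_eq0 ext_norm nrm_norm b b_ml.
- by move=> a b b_ml; exact: ml_opnormZ ext_norm nrm_norm a b b_ml.
- by move=> b1 b2; exact: ml_opnormD ext_norm nrm_norm b1 b2.
- by exists 1, 1; do 2!split => //; move=> b _; rewrite !mul1r.
move=> p Dp b b_ml b_neq0.
have b_gt0 := ml_opnorm_gt0 ext_norm nrm_norm b_ml b_neq0.
rewrite ler_pdivrMr //; apply: le_trans (Mi_mlnorm_le F G p nrm_norm b_ml) _.
set lam := (X in X ^+ i * _ <= _).
have lam_ge0 : 0 <= lam by rewrite le_max addr_ge0 ?opnorm_sq_ge0 ?(is_norm_ge0 nrm_norm).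
have lam_le : lam <= Num.max (nA + nB) (nC + 1).
  have A_le : opnorm_sq nrm (Amat F G p) <= nA by apply: (ub_le_sup fA); exists p.
  have B_le : nrm (Bvec F G p) <= nB by apply: (ub_le_sup fB); exists p.
  have C_le : opnorm_row nrm (Crow G p) <= nC by apply: (ub_le_sup fC); exists p.
  by rewrite ge_max !le_max (lerD A_le B_le) (lerD C_le (lexx 1)) orbT.
apply: (ler_wpM2r (ltW b_gt0)); apply: le_trans (expr_max_le_bigmax _ _ _).
by apply: lerXn2r; rewrite ?nnegrE // (le_trans lam_ge0 lam_le).
Qed.
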